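(* For each integer $n\ge 1$ there exists a 6-stack of rank $n$, and any two 6-stacks of rank $n$ are isomorphic.
   Context: All posets are finite. For a poset $P$ and $p\in P$, the rank $r(p)$ of $p$ is the largest $m$ such that there is a chain $p_0<p_1<\dots<p_m=p$ in $P$. The poset $P$ is ranked of rank $r(P)$ if every maximal chain of $P$ has exactly $r(P)+1$ elements. For integers $0\le i\le j$, $P(i,j)=\{p\in P: i\le r(p)\le j\}$ and $P(i)=P(i,i)$, each with the induced order. The 6-crown $C_6$ is the poset on $\{x_0,x_1,x_2,y_0,y_1,y_2\}$ whose only strict comparabilities are $x_0<y_0>x_1<y_1>x_2<y_2>x_0$. A 6-stack is a ranked poset $P$ of rank $n\ge 1$ such that for each $0\le i<n$, $P(i,i+1)$ is isomorphic to $C_6$. *)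

From mathcomp Require Import all_boot.
Set Warnings "-notation-overridden".

Set Implicit Arguments.
Unset Strict Implicit.
Unset Printing Implicit Defensive.

Section FinPoset.
Variables (T : finType) (le : rel T).

Definition is_poset : Prop :=
  [/\ forall x, le x x,
      forall x y, le x y -> le y x -> x = y &
      forall x y z, le x y -> le y z -> le x z].

Definition plt (x y : T) : bool := (x != y) && le x y.

Definition is_chain (A : {set T}) : bool :=
  [forall x in A, forall y in A, le x y || le y x].

Definition is_maximal_chain (A : {set T}) : bool :=
  is_chain A && [forall B : {set T}, (is_chain B && (A \subset B)) ==> (B == A)].

(* rank of p: the largest m such that there is a chain p_0 < ... < p_m = p,
   i.e. (number of elements of a largest chain with maximum p) - 1 *)
Definition rank (p : T) : nat :=
  (\max_(A : {set T} | is_chain A && (p \in A) && [forall x in A, le x p]) #|A|).-1.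

Definition ranked_of_rank (r : nat) : Prop :=
  forall A : {set T}, is_maximal_chain A -> #|A| = r.+1.

Definition level_set (i j : nat) : {set T} := [set p | i <= rank p <= j].
Definition level_carrier (i j : nat) : finType := {x : T | x \in level_set i j}.
Definition level_le (i j : nat) : rel (level_carrier i j) :=
  fun a b => le (val a) (val b).

End FinPoset.
Arguments level_le {T} le i j.

Definition poset_iso (T1 T2 : finType) (le1 : rel T1) (le2 : rel T2) : Prop :=
  exists f : T1 -> T2, bijective f /\ forall x y, le1 x y = le2 (f x) (f y).

(* The 6-crown C_6 on 'I_6: x_k is k and y_k is 3+k (k = 0,1,2).
   Strict comparabilities: x0<y0>x1<y1>x2<y2>x0. *)
Definition crown6_le : rel 'I_6 :=
  fun a b => (a == b) ||
    ((val a, val b) \in [:: (0,3); (1,3); (1,4); (2,4); (2,5); (0,5)]).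

Definition six_stack (T : finType) (le : rel T) (n : nat) : Prop :=
  [/\ is_poset le, 1 <= n, ranked_of_rank le n &
      forall i, i < n -> poset_iso (level_le le i i.+1) crown6_le].

Set Warnings "-notation-overridden".
From mathcomp Require Import all_boot zify.
Set Implicit Arguments.
Unset Strict Implicit.
Unset Printing Implicit Defensive.

(* In a 6-stack the crown between levels j and j+1 is K_{3,3} minus a perfect
   matching, so every y of rank j+1 has a unique "mate" of rank j not below it,
   and mating is a bijection between consecutive levels.  Labelling the three
   minimal elements by 'I_3 and carrying labels up along mates, x |-> (label x,
   rank x) is injective, and x <= y holds iff x = y, or rank y >= rank x + 2, or
   rank y = rank x + 1 with different labels (elements two levels apart are
   joined through the third label of the level in between). *)

Lemma inj_surj_bij (T1 T2 : finType) (f : T1 -> T2) :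
  injective f -> (forall y, exists x, f x = y) -> bijective f.
Proof.
move=> injf surjf; apply: (inj_card_bij injf).
rewrite -(card_codom injf); apply/subset_leq_card/subsetP => y _.
by have [x <-] := surjf y; apply: codom_f.
Qed.

Lemma poset_iso_sym (T1 T2 : finType) (le1 : rel T1) (le2 : rel T2) :
  poset_iso le1 le2 -> poset_iso le2 le1.
Proof.
case=> f [[g fK gK] lef]; exists g; split; first by exists f.
by move=> x y; rewrite lef !gK.
Qed.

Lemma poset_iso_trans (T1 T2 T3 : finType) (le1 : rel T1) (le2 : rel T2) (le3 : rel T3) :
  poset_iso le1 le2 -> poset_iso le2 le3 -> poset_iso le1 le3.
Proof.
case=> f [f_bij lef] [g [g_bij leg]].
by exists (g \o f); split; [exact: bij_comp | move=> x y; rewrite lef leg].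
Qed.

Section Chains.
Variables (T : finType) (le : rel T).

Lemma chainP (A : {set T}) :
  reflect {in A &, forall x y, le x y || le y x} (is_chain le A).
Proof.
apply: (iffP forallP) => [cA x y xA yA | cA x].
  by move/implyP: (cA x) => /(_ xA) /forallP /(_ y) /implyP; apply.
by apply/implyP=> xA; apply/forallP=> y; apply/implyP=> yA; apply: cA.
Qed.

Lemma chain_subset (A B : {set T}) : A \subset B -> is_chain le B -> is_chain le A.
Proof.
by move=> /subsetP sAB /chainP cB; apply/chainP=> x y /sAB xB /sAB; apply: cB.
Qed.

Lemma chain_setU1 (A : {set T}) x :
  is_chain le A -> {in A, forall y, le x y || le y x} -> le x x ->
  is_chain le (x |: A).
Proof.
move=> /chainP cA cx lexx; apply/chainP => u v.
rewrite !inE => /predU1P[->|uA] /predU1P[->|vA]; rewrite ?lexx //.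
- exact: cx.
- by rewrite orbC; apply: cx.
- exact: cA.
Qed.

Lemma maximal_chain_mem (A : {set T}) x :
  is_maximal_chain le A -> {in A, forall y, le x y || le y x} -> le x x -> x \in A.
Proof.
case/andP=> cA /forallP /(_ (x |: A)) maxA cx lexx.
by move: maxA; rewrite chain_setU1 // subsetUr => /eqP <-; rewrite setU11.
Qed.

Lemma maximal_chain_ex (A : {set T}) : is_chain le A ->
  exists2 B, is_maximal_chain le B & A \subset B.
Proof.
move=> cA; pose P B := is_chain le B && (A \subset B).
have PA : P A by rewrite /P cA subxx.
case: (arg_maxnP (fun B : {set T} => #|B|) PA) => B /andP[cB sAB] Bmax.
exists B => //; rewrite /is_maximal_chain cB; apply/forallP=> C.
apply/implyP=> /andP[cC sBC]; have := Bmax C; rewrite /P cC (subset_trans sAB sBC).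
by move=> /(_ isT) leCB; rewrite eq_sym eqEcard sBC.
Qed.

Lemma chain_card_le (phi : T -> nat) m (A : {set T}) :
  (forall x y, plt le x y -> phi x < phi y) -> is_chain le A ->
  {in A, forall x, phi x <= m} -> #|A| <= m.+1.
Proof.
move=> phi_mono /chainP cA phi_le.
have phi_inj : {in A &, injective (fun x => inord (phi x) : 'I_m.+1)}.
  move=> x y xA yA /(congr1 val); rewrite /= !inordK ?ltnS ?phi_le // => exy.
  apply/eqP/negPn/negP => nxy.
  have [lxy|lyx] := orP (cA x y xA yA).
    by have := phi_mono x y; rewrite /plt nxy lxy exy ltnn => /(_ isT).
  by have := phi_mono y x; rewrite /plt eq_sym nxy lyx exy ltnn => /(_ isT).
by rewrite -(card_in_imset phi_inj); apply: leq_trans (max_card _) _; rewrite card_ord.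
Qed.

End Chains.

Section Rank.
Variables (T : finType) (le : rel T).
Hypothesis le_po : is_poset le.

Lemma le_refl x : le x x. Proof. by case: le_po. Qed.
Lemma le_anti x y : le x y -> le y x -> x = y. Proof. by case: le_po => _ + _; apply. Qed.
Lemma le_trans x y z : le x y -> le y z -> le x z. Proof. by case: le_po => _ _; apply. Qed.

Definition rank_chain p (A : {set T}) :=
  is_chain le A && (p \in A) && [forall x in A, le x p].

Lemma rank_chain1 p : rank_chain p [set p].
Proof.
rewrite /rank_chain set11 andbT; apply/andP; split.
  by apply/chainP=> x y /set1P-> /set1P->; rewrite le_refl.
by apply/forall_inP=> x /set1P->; rewrite le_refl.
Qed.

Lemma rank_chain_card p A : rank_chain p A -> #|A| <= (rank le p).+1.
Proof.
rewrite /rank; set M := \max_(B | _) _ => pA.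
have M_gt0 : 0 < M.
  by apply: leq_trans (leq_bigmax_cond _ (rank_chain1 p)); rewrite cards1.
by rewrite prednK //; apply: leq_bigmax_cond.
Qed.

Lemma rank_chain_ex p : exists2 A, rank_chain p A & #|A| = (rank le p).+1.
Proof.
have : 0 < #|[pred A | rank_chain p A]|.
  by apply/card_gt0P; exists [set p]; rewrite inE rank_chain1.
case/(eq_bigmax_cond (fun A : {set T} => #|A|)) => A; rewrite inE => pA maxA.
exists A => //; rewrite /rank (eq_bigl (mem [pred B | rank_chain p B])) // maxA.
by rewrite prednK //; apply/card_gt0P; exists p; case/andP: pA => /andP[].
Qed.

Lemma rank_lt x y : plt le x y -> rank le x < rank le y.
Proof.
case/andP=> nxy lxy.
have [A /andP[/andP[cA xA] /forall_inP leAx] <-] := rank_chain_ex x.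
have yA : y \notin A by apply: contra nxy => /leAx lyx; rewrite (le_anti lxy lyx).
suff /rank_chain_card : rank_chain y (y |: A) by rewrite cardsU1 yA.
rewrite /rank_chain setU11 andbT chain_setU1 ?le_refl //=.
- apply/forall_inP=> z /setU1P[->|/leAx lzx]; [exact: le_refl | exact: le_trans lzx lxy].
- by move=> z /leAx lzx; rewrite (le_trans lzx lxy) orbT.
Qed.

Lemma rank_le_strict_mono (phi : T -> nat) p :
  (forall x y, plt le x y -> phi x < phi y) -> rank le p <= phi p.
Proof.
move=> phi_mono; have [A /andP[/andP[cA pA] /forall_inP leAp] cardA] := rank_chain_ex p.
rewrite -ltnS -cardA; apply: (chain_card_le phi_mono cA) => x xA.
have [->//|nxp] := eqVneq x p.
by apply/ltnW/phi_mono; rewrite /plt nxp leAp.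
Qed.

Lemma rank_ge_graded (phi : T -> nat) p :
  (forall q, 0 < phi q -> exists2 q', plt le q' q & phi q' = (phi q).-1) ->
  phi p <= rank le p.
Proof.
move=> phi_pred; suff : forall k q, phi q = k -> k <= rank le q by apply.
elim=> [//|k IHk] q phi_q.
have /phi_pred[q' q'q phi_q'] : 0 < phi q by rewrite phi_q.
by apply: leq_trans _ (rank_lt q'q); rewrite ltnS IHk // phi_q' phi_q.
Qed.

Lemma rank_pred x k : rank le x = k.+1 -> exists2 z, plt le z x & rank le z = k.
Proof.
move=> rx; have [A /andP[/andP[cA xA] /forall_inP leAx] cardA] := rank_chain_ex x.
have cardA' : #|A :\ x| = k.+1 by move: cardA; rewrite rx (cardsD1 x) xA => -[].
have [z0 z0A] : exists z0, z0 \in A :\ x by apply/card_gt0P; rewrite cardA'.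
case: (arg_maxnP (rank le) z0A) => z /setD1P[zx zA] zmax.
have zltx : plt le z x by rewrite /plt zx leAx.
exists z => //; apply/eqP; rewrite eqn_leq -ltnS -rx rank_lt //=.
rewrite -ltnS -cardA'; apply: rank_chain_card.
rewrite /rank_chain !inE zx zA (chain_subset (subsetDl A _) cA) /=.
apply/forall_inP=> w /setD1P[wx wA]; have [->|wz] := eqVneq w z; first exact: le_refl.
move/chainP: cA => /(_ w z wA zA) /orP[//|lzw].
have : plt le z w by rewrite /plt eq_sym wz.
have le_wz : rank le w <= rank le z by apply: zmax; apply/setD1P.
by move/rank_lt; rewrite ltnNge le_wz.
Qed.

Lemma ranked_rank_le n p : ranked_of_rank le n -> rank le p <= n.
Proof.
move=> ranked; have [A /andP[/andP[cA _] _] cardA] := rank_chain_ex p.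
rewrite -ltnS -cardA.
by have [B /ranked <-] := maximal_chain_ex cA; apply: subset_leq_card.
Qed.

End Rank.

Lemma crown6_lt_bot_top (v u : 'I_6) : crown6_le v u -> v != u -> (v < 3) && (3 <= u).
Proof. by case: u v => [[|[|[|[|[|[|//]]]]]] ?] [[|[|[|[|[|[|//]]]]]] ?]. Qed.

Lemma crown6_top_has_lower (u : 'I_6) : 3 <= u -> exists v, crown6_le v u && (v != u).
Proof.
by case: u => [[|[|[|[|[|[|//]]]]]] ?] // _;
  [exists ord0 | exists (@Ordinal 6 1 isT) | exists ord0].
Qed.

Lemma crown6_anti (k l : 'I_6) : crown6_le k l -> crown6_le l k -> k = l.
Proof.
by case: k l => [[|[|[|[|[|[|//]]]]]] ?] [[|[|[|[|[|[|//]]]]]] ?] //= _ _; apply: val_inj.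
Qed.

Lemma crown6_incomp_bot_ex (u : 'I_6) : 3 <= u -> exists2 v : 'I_6, v < 3 & ~~ crown6_le v u.
Proof.
by case: u => [[|[|[|[|[|[|//]]]]]] ?] // _;
  [exists (@Ordinal 6 2 isT) | exists (@Ordinal 6 0 isT) | exists (@Ordinal 6 1 isT)].
Qed.

Lemma crown6_incomp_bot_uniq (u v w : 'I_6) : 3 <= u -> v < 3 -> w < 3 ->
  ~~ crown6_le v u -> ~~ crown6_le w u -> v = w.
Proof.
by case: u v w => [[|[|[|[|[|[|//]]]]]] ?] [[|[|[|[|[|[|//]]]]]] ?] [[|[|[|[|[|[|//]]]]]] ?] //
  *; apply: val_inj.
Qed.

Lemma crown6_incomp_top_ex (v : 'I_6) : v < 3 -> exists2 u : 'I_6, 3 <= u & ~~ crown6_le v u.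
Proof.
by case: v => [[|[|[|[|[|[|//]]]]]] ?] // _;
  [exists (@Ordinal 6 4 isT) | exists (@Ordinal 6 5 isT) | exists (@Ordinal 6 3 isT)].
Qed.

Lemma crown6_incomp_top_uniq (v u w : 'I_6) : v < 3 -> 3 <= u -> 3 <= w ->
  ~~ crown6_le v u -> ~~ crown6_le v w -> u = w.
Proof.
by case: u v w => [[|[|[|[|[|[|//]]]]]] ?] [[|[|[|[|[|[|//]]]]]] ?] [[|[|[|[|[|[|//]]]]]] ?] //
  *; apply: val_inj.
Qed.

Definition third (a b : 'I_3) : 'I_3 := odflt ord0 [pick c | (c != a) && (c != b)].

Lemma third_neq a b : (third a b != a) && (third a b != b).
Proof.
rewrite /third; case: pickP => [c //|none].
have : [set: 'I_3] \subset [set a; b].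
  by apply/subsetP => c _; move/negbT: (none c); rewrite negb_and !negbK !inE.
by move/subset_leq_card; rewrite cardsT card_ord cards2; case: (a != b).
Qed.

Section Canon.
Variable n : nat.

Definition canon_stack : finType := ('I_3 * 'I_n.+1)%type.

Definition canon_le : rel canon_stack := fun p q =>
  [|| p == q, p.2.+2 <= q.2 | (p.2.+1 == q.2) && (p.1 != q.1)].

Lemma canon_leE p q : canon_le p q =
  if p.2.+1 < q.2 then true else if p.2.+1 == q.2 then p.1 != q.1 else p == q.
Proof.
rewrite /canon_le; case: (ltngtP p.2.+1 q.2) => cmp; rewrite ?orbT ?orbF //=.
by case: eqP => [epq|//]; move: cmp; rewrite epq; lia.
Qed.

Lemma canon_le_lt p q : canon_le p q -> p != q -> p.2 < q.2.
Proof.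
case/or3P=> [/eqP->|lt_pq|/andP[/eqP <- _]]; rewrite ?eqxx // => _.
exact: ltnW.
Qed.

Lemma canon_le_po : is_poset canon_le.
Proof.
split=> [p|p q|p q r].
- by rewrite /canon_le eqxx.
- move=> le_pq le_qp; apply/eqP/negPn/negP => npq.
  have := ltn_trans (canon_le_lt le_pq npq) (canon_le_lt le_qp _).
  by rewrite ltnn eq_sym => /(_ npq).
- move=> le_pq le_qr; have [->//|npq] := eqVneq p q; have [<-//|nqr] := eqVneq q r.
  by rewrite canon_leE (leq_ltn_trans (canon_le_lt le_pq npq) (canon_le_lt le_qr nqr)).
Qed.

Lemma canon_rank p : rank canon_le p = p.2.
Proof.
pose lvl (q : canon_stack) : nat := q.2.
apply/eqP; rewrite eqn_leq (rank_le_strict_mono canon_le_po (phi := lvl)); last first.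
  by move=> x y /andP[nxy le_xy]; apply: canon_le_lt.
apply: (rank_ge_graded canon_le_po (phi := lvl)) => q q_gt0.
have q1_lt : q.2.-1 < n.+1 by apply: leq_ltn_trans (leq_pred _) _.
exists (third q.1 q.1, inord q.2.-1); last by rewrite /lvl /= inordK.
rewrite /plt canon_leE /= inordK // prednK // ltnn eqxx.
rewrite (negbTE (proj1 (andP (third_neq _ _)))) andbT.
apply: contraTneq q_gt0 => /(congr1 (fun r : canon_stack => val r.2)) /=.
by rewrite /lvl inordK //; case: (nat_of_ord q.2) => // m /n_Sn.
Qed.

Lemma canon_chain_level_inj (A : {set canon_stack}) :
  is_chain canon_le A -> {in A &, forall p q : canon_stack, p.2 = q.2 :> nat -> p = q}.
Proof.
move=> /chainP cA p q pA qA eq2; apply/eqP/negPn/negP => npq.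
case/orP: (cA p q pA qA) => [/canon_le_lt|/canon_le_lt]; first by move/(_ npq); rewrite eq2 ltnn.
by rewrite eq_sym => /(_ npq); rewrite eq2 ltnn.
Qed.

Lemma canon_comparable (p q : canon_stack) :
  p.2 != q.2 :> nat -> (p.2.+1 == q.2 -> p.1 != q.1) -> (q.2.+1 == p.2 -> q.1 != p.1) ->
  canon_le p q || canon_le q p.
Proof.
rewrite !canon_leE; case: (ltngtP p.2 q.2) => // cmp _ adj_pq adj_qp.
  case: (ltngtP p.2.+1 q.2) => [//|gt|eq] /=; first by rewrite ltnS leqNgt cmp in gt.
  by rewrite adj_pq // eq.
case: (ltngtP q.2.+1 p.2) => [|gt|eq] /=; rewrite ?orbT //; first by rewrite ltnS leqNgt cmp in gt.
by rewrite adj_qp ?orbT // eq.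
Qed.

Definition chain_label (A : {set canon_stack}) (m : nat) : 'I_3 :=
  if [pick q in A | q.2 == m :> nat] is Some q then q.1 else ord0.

Lemma chain_labelE A q : is_chain canon_le A -> q \in A -> chain_label A q.2 = q.1.
Proof.
move=> cA qA; rewrite /chain_label; case: pickP => [q' /andP[q'A /eqP eq2]|/(_ q)].
  by rewrite (canon_chain_level_inj cA q'A qA eq2).
by rewrite qA eqxx.
Qed.

Lemma canon_maximal_chain_level A (k : 'I_n.+1) :
  is_maximal_chain canon_le A -> exists2 q, q \in A & q.2 = k.
Proof.
move=> mA; have cA : is_chain canon_le A by case/andP: mA.
case: (pickP [pred q in A | q.2 == k]) => [q /andP[qA /eqP]|none]; first by exists q.
pose x : canon_stack := (third (chain_label A k.-1) (chain_label A k.+1), k).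
suff xA : x \in A by move: (none x); rewrite /= xA eqxx.
apply: maximal_chain_mem mA _ (le_refl canon_le_po x) => q qA.
have /andP[ne_lo ne_hi] := third_neq (chain_label A k.-1) (chain_label A k.+1).
apply: canon_comparable => /=.
- by apply: contraFneq (none q) => /val_inj ->; rewrite /= qA eqxx.
- by move=> /eqP adj; rewrite adj (chain_labelE cA qA) in ne_hi *.
- by move=> /eqP adj; rewrite -adj /= (chain_labelE cA qA) eq_sym in ne_lo *.
Qed.

Lemma canon_ranked : ranked_of_rank canon_le n.
Proof.
move=> A mA; have cA : is_chain canon_le A by case/andP: mA.
apply/eqP; rewrite eqn_leq (chain_card_le (phi := fun q : canon_stack => val q.2) _ cA) /=.
- apply: leq_trans (leq_imset_card (fun q : canon_stack => q.2) A).
  rewrite (_ : [set q.2 | q in A] = setT) ?cardsT ?card_ord //.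
  apply/setP => k; rewrite inE.
  by have [q qA <-] := canon_maximal_chain_level k mA; apply: imset_f.
- by move=> x y /andP[nxy le_xy]; apply: canon_le_lt.
- by move=> q _; rewrite -ltnS.
Qed.
End Canon.
Arguments canon_le : clear implicits.

Section CanonCrown.
Variables n i : nat.
Hypothesis lt_i_n : i < n.

(* x_a is sent to (a, i) and y_b to (b - 1 mod 3, i + 1). *)
Definition crown_embed (k : 'I_6) : canon_stack n :=
  (inord (nth 0 [:: 0; 1; 2; 2; 0; 1] k), inord (if k < 3 then i else i.+1)).

Lemma crown_embed_le k l : canon_le n (crown_embed k) (crown_embed l) = crown6_le k l.
Proof.
case: k l => [[|[|[|[|[|[|//]]]]]] ?] [[|[|[|[|[|[|//]]]]]] ?];
  rewrite /canon_le /crown6_le xpair_eqE -!val_eqE /= !inordK ?ltnS ?(ltnW lt_i_n) //;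
  rewrite ?in_cons ?in_nil /=; lia.
Qed.

Lemma crown_embed_onto (p : canon_stack n) : i <= p.2 <= i.+1 -> exists k, crown_embed k = p.
Proof.
case: p => a b /= /andP[le_ib le_bi].
have [eb|eb] : b = i :> nat \/ b = i.+1 :> nat by lia.
  case: a => [[|[|[|//]]] ?];
    [exists (@Ordinal 6 0 isT) | exists (@Ordinal 6 1 isT) | exists (@Ordinal 6 2 isT)];
    by congr pair; apply: val_inj; rewrite /= inordK ?eb ?ltnS ?(ltnW lt_i_n).
case: a => [[|[|[|//]]] ?];
  [exists (@Ordinal 6 4 isT) | exists (@Ordinal 6 5 isT) | exists (@Ordinal 6 3 isT)];
  by congr pair; apply: val_inj; rewrite /= inordK ?eb ?ltnS.
Qed.

Lemma canon_crown : poset_iso (level_le (canon_le n) i i.+1) crown6_le.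
Proof.
have mem k : crown_embed k \in level_set (canon_le n) i i.+1.
  by rewrite inE canon_rank /= inordK; case: (k < 3); rewrite ?leqnn ?leqnSn ?ltnS ?(ltnW lt_i_n).
pose f k : level_carrier (canon_le n) i i.+1 := Sub (crown_embed k) (mem k).
apply: poset_iso_sym; exists f; split => [|k l]; last by rewrite /level_le /= crown_embed_le.
apply: inj_surj_bij => [k l /(congr1 val) /= ekl | c].
  by apply: crown6_anti; rewrite -!crown_embed_le ekl le_refl //; apply: canon_le_po.
have [|k ek] := crown_embed_onto (p := val c); first by have := valP c; rewrite inE canon_rank.
by exists k; apply: val_inj.
Qed.
End CanonCrown.

Lemma canon_six_stack n : 0 < n -> six_stack (canon_le n) n.
Proof.
by move=> n_gt0; split=> [||| i]; [exact: canon_le_po | | exact: canon_ranked | exact: canon_crown].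
Qed.

Section LevelCrown.
Variables (T : finType) (le : rel T) (i : nat).
Hypothesis le_po : is_poset le.
Local Notation level := (level_carrier le i i.+1).
Variables (h : level -> 'I_6) (h' : 'I_6 -> level).
Hypotheses (hK : cancel h h') (h'K : cancel h' h).
Hypothesis le_h : forall c d, level_le le i i.+1 c d = crown6_le (h c) (h d).

Lemma level_rank (c : level) : i <= rank le (val c) <= i.+1.
Proof. by have := valP c; rewrite inE. Qed.

Lemma le_h' k l : le (val (h' k)) (val (h' l)) = crown6_le k l.
Proof. by rewrite -[le _ _]/(level_le le i i.+1 _ _) le_h !h'K. Qed.

Lemma crown_bot_rank c : rank le (val c) = i -> h c < 3.
Proof.
move=> rc; rewrite ltnNge; apply/negP => /crown6_top_has_lower [v /andP[le_v ne_v]].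
have : plt le (val (h' v)) (val c).
  rewrite /plt -{2}(hK c) le_h' le_v andbT.
  by apply: contra ne_v => /eqP/val_inj <-; rewrite h'K.
by move/(rank_lt le_po); rewrite rc ltnNge; case/andP: (level_rank (h' v)) => ->.
Qed.

Lemma crown_top_rank c : rank le (val c) = i.+1 -> 3 <= h c.
Proof.
case/(rank_pred le_po) => z /andP[ne_z le_z] rz.
have zL : z \in level_set le i i.+1 by rewrite inE rz leqnn leqnSn.
have le_zc : crown6_le (h (Sub z zL)) (h c) by rewrite -le_h.
have ne_zc : h (Sub z zL) != h c.
  by apply: contra ne_z => /eqP/(can_inj hK)/(congr1 val) /= ->.
by case/andP: (crown6_lt_bot_top le_zc ne_zc).
Qed.

Lemma crown_rank c : rank le (val c) = if h c < 3 then i else i.+1.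
Proof.
case/andP: (level_rank c) => ge_i le_i1.
have [rc|rc] : rank le (val c) = i \/ rank le (val c) = i.+1 by lia.
  by rewrite (crown_bot_rank rc).
by rewrite ltnNge (crown_top_rank rc).
Qed.

End LevelCrown.

Lemma level_crown_enum (T : finType) (le : rel T) i :
  is_poset le -> poset_iso (level_le le i i.+1) crown6_le ->
  exists e : 'I_6 -> T,
  [/\ injective e, forall k l, le (e k) (e l) = crown6_le k l,
      forall k, rank le (e k) = if k < 3 then i else i.+1,
      forall x, rank le x = i -> exists2 v : 'I_6, v < 3 & e v = x &
      forall x, rank le x = i.+1 -> exists2 u : 'I_6, 3 <= u & e u = x].
Proof.
move=> le_po [h [[h' hK h'K] le_h]].
exists (fun k => val (h' k)); split.
- by move=> k l /val_inj/(can_inj h'K).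
- exact: le_h' h'K le_h.
- by move=> k; rewrite (crown_rank le_po hK h'K le_h) h'K.
- move=> x rx; have xL : x \in level_set le i i.+1 by rewrite inE rx leqnn leqnSn.
  by exists (h (Sub x xL)); rewrite ?hK // (crown_bot_rank le_po hK h'K le_h).
- move=> x rx; have xL : x \in level_set le i i.+1 by rewrite inE rx leqnn leqnSn.
  by exists (h (Sub x xL)); rewrite ?hK // (crown_top_rank le_po hK le_h).
Qed.

Section Stack.
Variables (T : finType) (le : rel T) (n : nat).
Hypotheses (le_po : is_poset le) (ranked : ranked_of_rank le n).
Hypothesis crowns : forall i, i < n -> poset_iso (level_le le i i.+1) crown6_le.
Local Notation r := (rank le).

Lemma rank_le_n x : r x <= n. Proof. exact: (ranked_rank_le le_po x ranked). Qed.

Lemma rank_succ_lt j y : r y = j.+1 -> j < n.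
Proof. by move=> ry; have := rank_le_n y; rewrite ry. Qed.

Definition mate y := odflt y [pick z | (r z == (r y).-1) && ~~ le z y].

Lemma mateP j y : r y = j.+1 -> r (mate y) = j /\ ~~ le (mate y) y.
Proof.
move=> ry; rewrite /mate; case: pickP => [z /andP[/eqP -> ->]|none]; first by rewrite ry.
have [e [_ le_e rank_e _ top]] := level_crown_enum le_po (crowns (rank_succ_lt ry)).
have [u u3 ey] := top y ry; have [v v3 nle] := crown6_incomp_bot_ex u3.
by move: (none (e v)); rewrite rank_e v3 ry eqxx -ey le_e nle.
Qed.

Lemma mate_uniq j y z : r y = j.+1 -> r z = j -> ~~ le z y -> z = mate y.
Proof.
move=> ry rz nle; have [rm nlem] := mateP ry.
have [e [_ le_e _ bot top]] := level_crown_enum le_po (crowns (rank_succ_lt ry)).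
have [u u3 ey] := top y ry; have [v v3 ez] := bot z rz; have [w w3 em] := bot _ rm.
move: nle nlem; rewrite -em -ey -ez !le_e => nle nlem.
by rewrite (crown6_incomp_bot_uniq u3 v3 w3 nle nlem).
Qed.

Lemma le_mate j x y : r y = j.+1 -> r x = j -> le x y = (x != mate y).
Proof.
move=> ry rx; apply/idP/idP => [le_xy|ne_xm].
  by apply: contraTneq le_xy => ->; case: (mateP ry).
by apply/negPn; apply: contra ne_xm => /(mate_uniq ry rx) ->.
Qed.

Lemma mate_inj j y y' : r y = j.+1 -> r y' = j.+1 -> mate y = mate y' -> y = y'.
Proof.
move=> ry ry' eqm; have [rm nlem] := mateP ry; have [_ nlem'] := mateP ry'.
have [e [_ le_e _ bot top]] := level_crown_enum le_po (crowns (rank_succ_lt ry)).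
have [u u3 ey] := top y ry; have [u' u3' ey'] := top y' ry'; have [v v3 em] := bot _ rm.
move: nlem nlem'; rewrite -eqm -em -ey -ey' !le_e => nle nle'.
by rewrite (crown6_incomp_top_uniq v3 u3 u3' nle nle').
Qed.

Lemma mate_onto j z : j < n -> r z = j -> exists2 y, r y = j.+1 & mate y = z.
Proof.
move=> jn rz; have [e [_ le_e rank_e bot _]] := level_crown_enum le_po (crowns jn).
have [v v3 ez] := bot z rz; have [u u3 nle] := crown6_incomp_top_ex v3.
have ru : r (e u) = j.+1 by rewrite rank_e ltnNge u3.
by exists (e u) => //; apply/esym/(mate_uniq ru rz); rewrite -ez le_e.
Qed.

Lemma level0_labelling : 0 < n -> exists F0 : T -> 'I_3,
  (forall x y, r x = 0 -> r y = 0 -> F0 x = F0 y -> x = y) /\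
  (forall a, exists2 x, r x = 0 & F0 x = a).
Proof.
move=> n_gt0; have [e [inj_e _ rank_e bot _]] := level_crown_enum le_po (crowns n_gt0).
pose w (a : 'I_3) : 'I_6 := widen_ord (isT : 3 <= 6) a.
pose F0 x := odflt ord0 [pick a | e (w a) == x].
have F0K x : r x = 0 -> e (w (F0 x)) = x.
  move=> rx; have [v v3 ev] := bot x rx; rewrite /F0; case: pickP => [a /eqP //|].
  by move/(_ (Ordinal v3)); rewrite /= -ev (_ : w _ = v) ?eqxx //; apply: val_inj.
exists F0; split=> [x y rx ry eqF|a]; first by rewrite -(F0K x rx) -(F0K y ry) eqF.
have rwa : r (e (w a)) = 0 by rewrite rank_e /= ltn_ord.
exists (e (w a)) => //; apply: val_inj.
by move/inj_e/(congr1 val): (F0K _ rwa).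
Qed.

Section Labelling.
Variable F0 : T -> 'I_3.
Hypothesis F0_inj : forall x y, r x = 0 -> r y = 0 -> F0 x = F0 y -> x = y.
Hypothesis F0_onto : forall a, exists2 x, r x = 0 & F0 x = a.

Definition label x := F0 (iter (r x) mate x).

Lemma label_mate j y : r y = j.+1 -> label y = label (mate y).
Proof. by move=> ry; rewrite /label ry iterSr; case: (mateP ry) => ->. Qed.

Lemma label_inj k x y : r x = k -> r y = k -> label x = label y -> x = y.
Proof.
elim: k x y => [|k IHk] x y rx ry; first by rewrite /label rx ry /=; apply: F0_inj.
rewrite (label_mate rx) (label_mate ry); have [rmx _] := mateP rx; have [rmy _] := mateP ry.
by move/(IHk _ _ rmx rmy)/(mate_inj rx ry).
Qed.

Lemma label_onto k a : k <= n -> exists2 x, r x = k & label x = a.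
Proof.
elim: k => [_|k IHk lt_k_n]; first by have [x rx <-] := F0_onto a; exists x; rewrite /label rx.
have [x rx <-] := IHk (ltnW lt_k_n); have [y ry <-] := mate_onto lt_k_n rx.
by exists y; rewrite // (label_mate ry).
Qed.

Lemma le_cover x y : r y = (r x).+1 -> le x y = (label x != label y).
Proof.
move=> ry; rewrite (le_mate ry (erefl _)) (label_mate ry); congr negb.
have [rm _] := mateP ry; apply/eqP/eqP => [->//|]; exact: label_inj (erefl _) rm.
Qed.

Lemma lower_cover_avoiding k y a : r y = k.+1 -> exists2 z, r z = k & le z y && (label z != a).
Proof.
move=> ry; have /andP[ne_a ne_y] := third_neq a (label y).
have [|z rz lz] := label_onto (third a (label y)) (k := k).
  by apply: ltnW; apply: rank_succ_lt ry.
by exists z => //; rewrite le_cover ?rz // lz ne_a ne_y.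
Qed.

Lemma le_far d x y : r y = r x + d.+2 -> le x y.
Proof.
elim: d y => [|d IHd] y ry.
  have ry' : r y = (r x).+2 by rewrite ry addn2.
  have [z rz /andP[le_zy ne_z]] := lower_cover_avoiding (label x) ry'.
  have le_xz : le x z by rewrite le_cover // eq_sym.
  exact: (le_trans le_po le_xz le_zy).
have ry' : r y = (r x + d.+2).+1 by rewrite ry addnS.
have [z rz /andP[le_zy _]] := lower_cover_avoiding (label x) ry'.
exact: (le_trans le_po (IHd z rz) le_zy).
Qed.

Lemma le_rank_geq x y : r y <= r x -> le x y = (x == y).
Proof.
move=> ge_xy; apply/idP/eqP => [le_xy|->]; last exact: le_refl.
apply/eqP/negPn/negP => ne_xy.
have lt_xy : plt le x y by rewrite /plt ne_xy le_xy.
by have := rank_lt le_po lt_xy; rewrite ltnNge ge_xy.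
Qed.

Lemma le_stackE x y : le x y =
  if (r x).+1 < r y then true else if (r x).+1 == r y then label x != label y else x == y.
Proof.
case: ltngtP => [lt_xy|gt_xy|eq_xy].
- by apply: (le_far (d := r y - (r x).+2)); lia.
- by apply: le_rank_geq; rewrite -ltnS.
- exact: le_cover.
Qed.

Definition to_canon x : canon_stack n := (label x, inord (r x)).

Lemma to_canon_bij : bijective to_canon.
Proof.
apply: inj_surj_bij => [x y [eq_l /(congr1 val)] | [a k]].
  by rewrite /= !inordK ?ltnS ?rank_le_n // => eq_r; apply: label_inj (erefl _) (esym eq_r) eq_l.
have [|x rx lx] := label_onto a (k := k); first by rewrite -ltnS.
by exists x; rewrite /to_canon lx; congr pair; apply: val_inj; rewrite /= inordK ?rx.
Qed.

Lemma to_canon_le x y : le x y = canon_le n (to_canon x) (to_canon y).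
Proof.
by rewrite le_stackE canon_leE (inj_eq (bij_inj to_canon_bij)) /= !inordK ?ltnS ?rank_le_n.
Qed.

End Labelling.

Lemma stack_iso_canon : 0 < n -> poset_iso le (canon_le n).
Proof.
case/level0_labelling=> F0 [F0_inj F0_onto].
by exists (to_canon F0); split; [exact: to_canon_bij F0_inj F0_onto | exact: to_canon_le].
Qed.

End Stack.

Theorem proposition4p1 (n : nat) (hn : 1 <= n) :
  (exists (T : finType) (le : rel T), six_stack le n) /\
  (forall (T1 T2 : finType) (le1 : rel T1) (le2 : rel T2),
      six_stack le1 n -> six_stack le2 n -> poset_iso le1 le2).
Proof.
split; first by exists (canon_stack n), (canon_le n); apply: canon_six_stack.
move=> T1 T2 le1 le2 [po1 _ ranked1 crowns1] [po2 _ ranked2 crowns2].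
apply: poset_iso_trans (stack_iso_canon po1 ranked1 crowns1 hn) _.
exact: poset_iso_sym (stack_iso_canon po2 ranked2 crowns2 hn).
Qed.
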